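(* Let $(\mathbb{E},\dot 1,\dot\times)$ with $L\dashv p$ be a weakly closed monoidal refinement of a symmetric monoidal closed category $(\mathbb{B},I,\otimes,\multimap)$ in which the monoidal structure of $\mathbb{E}$ is cartesian (finite products $\dot 1,\dot\times$), let $\mathcal{T}$ be a $\otimes$-strong monad on $\mathbb{B}$ and $(M,\le,1,\cdot)$ a preordered monoid. Then $\mathbf{Asign}_{\dot\times}(\mathcal{T},M)=\mathbf{Comp}(\mathcal{T},M)$: a monotone map $\Delta:(M,\le)\to\mathbf{Ord}(p,T)$ is an $M$-graded $\dot\times$-parameterized assignment of $\mathbb{E}$ on $\mathcal{T}$ if and only if it is an $M$-graded sequentially composable family of $\mathbb{E}$-objects above $\mathcal{T}$.
   Context: A weakly closed monoidal refinement of the SMCC $(\mathbb{B},I,\otimes,\multimap)$ (evaluation $ev$) is a symmetric monoidal category $(\mathbb{E},\dot I,\dot\otimes)$ — here the cartesian one $(\dot1,\dot\times)$ — with an adjunction $L\dashv p$, $p:\mathbb{E}\to\mathbb{B}$, such that (a) $p$ is strict symmetric monoidal and faithful; (b) the unit of the adjunction is the identity; (c) for each $X\in\mathbb{B}$, $-\dot\times LX$ has a right adjoint $X\dot\pitchfork-$; (d) $(p,p)$ is a map of adjunctions from $(-\dot\times LX\dashv X\dot\pitchfork-)$ to $(-\otimes X\dashv X\multimap-)$. For $X,Y\in\mathbb{E}$ and $f\in\mathbb{B}(pX,pY)$, $f:X\dot\to Y$ means $f=p\dot f$ for some $\dot f\in\mathbb{E}(X,Y)$. Since $p$ is a right adjoint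 and strict monoidal, $p(Z\dot\times W)=pZ\otimes pW$ is a product in $\mathbb{B}$, and $\langle\mathrm{id}_{pZ},f\rangle$ denotes pairing into it. $\mathcal{T}=(T,\eta,(-)^\dagger)$ is a monad on $\mathbb{B}$ with strength $\sigma$; $f^\ddagger=f^\dagger\circ\sigma$ for $f:X\otimes Y\to TZ$; $\mathrm{kl}_{X,Y}=(ev_{X,TY})^\ddagger$. $\mathbf{Ord}(p,T)$ is the class of maps $G:|\mathbb{B}|\to|\mathbb{E}|$ with $pGX=TX$, preordered by $G\le G'$ iff $\mathrm{id}_{TX}:GX\dot\to G'X$ for all $X$. $\mathbf{Asign}_{\dot\times}(\mathcal{T},M)$: monotone $\Delta:(M,\le)\to\mathbf{Ord}(p,T)$ such that $\mathrm{kl}_{X,Y}:(X\dot\pitchfork\Delta\alpha Y)\dot\times\Delta\beta X\dot\to\Delta(\beta\cdot\alpha)Y$ for all $\alpha,\beta,X,Y$. $\mathbf{Comp}(\mathcal{T},M)$: monotone $\Delta:(M,\le)\to\mathbf{Ord}(p,T)$ such that for all $\alpha,\beta\in M$, $Z\in\mathbb{E}$, $X,Y\in\mathbb{B}$, and $\mathbb{B}$-morphisms $f:pZ\to TX$, $g:pZ\otimes X\to TY$ with $f:Z\dot\to\Delta\alpha X$ and $g:Z\dot\times LX\dot\to\Delta\beta Y$, we have $g^\ddagger\circ\langle\mathrm{id}_{pZ},f\rangle:Z\dot\to\Delta(\alpha\cdot\beta)Y$. Both are subclasses of the class of monotone maps $(M,\le)\to\mathbf{Ord}(p,T)$. *)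

Record Cat : Type := {
  ob : Type;
  hom : ob -> ob -> Type;
  idm : forall A, hom A A;
  comp : forall A B D, hom B D -> hom A B -> hom A D;
  comp_idl : forall A B (f : hom A B), comp _ _ _ (idm B) f = f;
  comp_idr : forall A B (f : hom A B), comp _ _ _ f (idm A) = f;
  comp_assoc : forall A B D E (f : hom A B) (g : hom B D) (h : hom D E),
    comp _ _ _ h (comp _ _ _ g f) = comp _ _ _ (comp _ _ _ h g) f
}.
Arguments ob _ : clear implicits.
Arguments hom {_} _ _.
Arguments idm {_} _.
Arguments comp {_ _ _ _} _ _.
Notation "g ∘ f" := (comp g f) (at level 40, left associativity).

Record Monoidal (C : Cat) := {
  tens : ob C -> ob C -> ob C;
  munit : ob C;
  tensm : forall A A' B B', hom A A' -> hom B B' -> hom (tens A B) (tens A' B');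
  tensm_id : forall A B, tensm _ _ _ _ (idm A) (idm B) = idm (tens A B);
  tensm_comp : forall A A' A'' B B' B'' (f : hom A A') (f' : hom A' A'')
      (g : hom B B') (g' : hom B' B''),
    tensm _ _ _ _ (f' ∘ f) (g' ∘ g) = tensm _ _ _ _ f' g' ∘ tensm _ _ _ _ f g;
  assoc : forall A B D, hom (tens (tens A B) D) (tens A (tens B D));
  assoc_inv : forall A B D, hom (tens A (tens B D)) (tens (tens A B) D);
  assoc_iso1 : forall A B D, assoc_inv A B D ∘ assoc A B D = idm _;
  assoc_iso2 : forall A B D, assoc A B D ∘ assoc_inv A B D = idm _;
  assoc_nat : forall A A' B B' D D' (f : hom A A') (g : hom B B') (h : hom D D'),
    tensm _ _ _ _ f (tensm _ _ _ _ g h) ∘ assoc A B D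
    = assoc A' B' D' ∘ tensm _ _ _ _ (tensm _ _ _ _ f g) h;
  lunit : forall A, hom (tens munit A) A;
  lunit_inv : forall A, hom A (tens munit A);
  lunit_iso1 : forall A, lunit_inv A ∘ lunit A = idm _;
  lunit_iso2 : forall A, lunit A ∘ lunit_inv A = idm _;
  lunit_nat : forall A A' (f : hom A A'),
    f ∘ lunit A = lunit A' ∘ tensm _ _ _ _ (idm munit) f;
  runit : forall A, hom (tens A munit) A;
  runit_inv : forall A, hom A (tens A munit);
  runit_iso1 : forall A, runit_inv A ∘ runit A = idm _;
  runit_iso2 : forall A, runit A ∘ runit_inv A = idm _;
  runit_nat : forall A A' (f : hom A A'),
    f ∘ runit A = runit A' ∘ tensm _ _ _ _ f (idm munit);
  pentagon : forall A B D E,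
    assoc A B (tens D E) ∘ assoc (tens A B) D E
    = tensm _ _ _ _ (idm A) (assoc B D E) ∘ assoc A (tens B D) E
        ∘ tensm _ _ _ _ (assoc A B D) (idm E);
  triangle : forall A B,
    tensm _ _ _ _ (idm A) (lunit B) ∘ assoc A munit B
    = tensm _ _ _ _ (runit A) (idm B)
}.
Arguments tens {_} _ _ _.
Arguments munit {_} _.
Arguments tensm {_} _ {_ _ _ _} _ _.
Arguments assoc {_} _ _ _ _.
Arguments assoc_inv {_} _ _ _ _.
Arguments lunit {_} _ _.
Arguments lunit_inv {_} _ _.
Arguments runit {_} _ _.
Arguments runit_inv {_} _ _.

Record Sym (C : Cat) (M : Monoidal C) := {
  sym : forall A B, hom (tens M A B) (tens M B A);
  sym_inv : forall A B, sym B A ∘ sym A B = idm _;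
  sym_nat : forall A A' B B' (f : hom A A') (g : hom B B'),
    tensm M g f ∘ sym A B = sym A' B' ∘ tensm M f g;
  hexagon : forall A B D,
    assoc M B D A ∘ sym A (tens M B D) ∘ assoc M A B D
    = tensm M (idm B) (sym A D) ∘ assoc M B A D ∘ tensm M (sym A B) (idm D)
}.
Arguments Sym {_} _.
Arguments sym {_ _} _ _ _.

(* closed structure: X ⊸ Y = ihom X Y, evaluation ev, currying *)
Record Closed (C : Cat) (M : Monoidal C) := {
  ihom : ob C -> ob C -> ob C;
  ev : forall X Y, hom (tens M (ihom X Y) X) Y;
  curry : forall A X Y, hom (tens M A X) Y -> hom A (ihom X Y);
  ev_curry : forall A X Y (f : hom (tens M A X) Y),
    ev X Y ∘ tensm M (curry _ _ _ f) (idm X) = f;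
  curry_uniq : forall A X Y (f : hom (tens M A X) Y) (h : hom A (ihom X Y)),
    ev X Y ∘ tensm M h (idm X) = f -> h = curry _ _ _ f
}.
Arguments Closed {_} _.
Arguments ihom {_ _} _ _ _.
Arguments ev {_ _} _ _ _.
Arguments curry {_ _} _ {_ _ _} _.

(* Encoded in "displayed" form (refinement system): for a B-object A,  *)
(* Eob A is the type of E-objects Z with pZ = A; for E-objects Z over A *)
(* and W over B and a B-morphism f : A -> B, Ehom Z W f means           *)
(* "f : Z ->. W", i.e. f = p(f') for a (necessarily unique, p being     *)
(* faithful) E-morphism f' : Z -> W.  This encodes exactly a category E *)
(* with a faithful functor p : E -> B.                                  *)
Record WCMR (C : Cat) (M : Monoidal C) (S : Sym M) (K : Closed M) := {
  Eob : ob C -> Type;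
  Ehom : forall A B, Eob A -> Eob B -> hom A B -> Prop;
  Ehom_id : forall A (Z : Eob A), Ehom _ _ Z Z (idm A);
  Ehom_comp : forall A B D (Z : Eob A) (W : Eob B) (V : Eob D)
      (f : hom A B) (g : hom B D),
    Ehom _ _ Z W f -> Ehom _ _ W V g -> Ehom _ _ Z V (g ∘ f);
  (* (a) the monoidal structure (1., x.) of E, strictly preserved by p *)
  Eone : Eob (munit M);
  Etens : forall A B, Eob A -> Eob B -> Eob (tens M A B);
  Etensm : forall A A' B B' (Z : Eob A) (Z' : Eob A') (W : Eob B) (W' : Eob B')
      (f : hom A A') (g : hom B B'),
    Ehom _ _ Z Z' f -> Ehom _ _ W W' g ->
    Ehom _ _ (Etens _ _ Z W) (Etens _ _ Z' W') (tensm M f g);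
  Eassoc : forall A B D (Z : Eob A) (W : Eob B) (V : Eob D),
    Ehom _ _ (Etens _ _ (Etens _ _ Z W) V) (Etens _ _ Z (Etens _ _ W V)) (assoc M A B D);
  Eassoc_inv : forall A B D (Z : Eob A) (W : Eob B) (V : Eob D),
    Ehom _ _ (Etens _ _ Z (Etens _ _ W V)) (Etens _ _ (Etens _ _ Z W) V) (assoc_inv M A B D);
  Elunit : forall A (Z : Eob A), Ehom _ _ (Etens _ _ Eone Z) Z (lunit M A);
  Elunit_inv : forall A (Z : Eob A), Ehom _ _ Z (Etens _ _ Eone Z) (lunit_inv M A);
  Erunit : forall A (Z : Eob A), Ehom _ _ (Etens _ _ Z Eone) Z (runit M A);
  Erunit_inv : forall A (Z : Eob A), Ehom _ _ Z (Etens _ _ Z Eone) (runit_inv M A);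
  Esym : forall A B (Z : Eob A) (W : Eob B),
    Ehom _ _ (Etens _ _ Z W) (Etens _ _ W Z) (sym S A B);
  (* this monoidal structure is cartesian: 1. is terminal ... *)
  bang : forall A, hom A (munit M);
  bang_uniq : forall A (f : hom A (munit M)), f = bang A;
  Ebang : forall A (Z : Eob A), Ehom _ _ Z Eone (bang A);
  (* ... and Z x. W is a product, with projections
     p(pi1) = runit o (id (x) p(!)), p(pi2) = lunit o (p(!) (x) id);
     p (a right adjoint) preserves it, so pZ (x) pW is a product in B. *)
  pair : forall D A B, Eob A -> Eob B -> hom D A -> hom D B -> hom D (tens M A B);
  pair_proj1 : forall D A B (Z : Eob A) (W : Eob B) (a : hom D A) (b : hom D B),
    runit M A ∘ tensm M (idm A) (bang B) ∘ pair _ _ _ Z W a b = a;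
  pair_proj2 : forall D A B (Z : Eob A) (W : Eob B) (a : hom D A) (b : hom D B),
    lunit M B ∘ tensm M (bang A) (idm B) ∘ pair _ _ _ Z W a b = b;
  pair_uniq : forall D A B (Z : Eob A) (W : Eob B) (a : hom D A) (b : hom D B)
      (h : hom D (tens M A B)),
    runit M A ∘ tensm M (idm A) (bang B) ∘ h = a ->
    lunit M B ∘ tensm M (bang A) (idm B) ∘ h = b ->
    h = pair _ _ _ Z W a b;
  Epair : forall D A B (V : Eob D) (Z : Eob A) (W : Eob B) (a : hom D A) (b : hom D B),
    Ehom _ _ V Z a -> Ehom _ _ V W b -> Ehom _ _ V (Etens _ _ Z W) (pair _ _ _ Z W a b);
  (* L -| p with identity unit: pLA = A, and every B-map f : A -> pW
     is (the image of) an E-map LA -> W, namely its transpose. *)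
  EL : forall A, Eob A;
  EL_lift : forall A B (W : Eob B) (f : hom A B), Ehom _ _ (EL A) W f;
  (* (c)+(d): X ⋔ - right adjoint to - x. LX, and (p,p) is a map of
     adjunctions to (- (x) X -| X ⊸ -): p(X ⋔ W) = X ⊸ pW, the counit
     lies over ev, and transposition lies over currying. *)
  Epitch : forall X B, Eob B -> Eob (ihom K X B);
  Eev : forall X B (W : Eob B),
    Ehom _ _ (Etens _ _ (Epitch X B W) (EL X)) W (ev K X B);
  Ecurry : forall A X B (Z : Eob A) (W : Eob B) (g : hom (tens M A X) B),
    Ehom _ _ (Etens _ _ Z (EL X)) W g -> Ehom _ _ Z (Epitch X B W) (curry K g)
}.
Arguments WCMR {_ _} _ _.
Arguments Eob {_ _ _ _} _ _.
Arguments Ehom {_ _ _ _} _ {_ _} _ _ _.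
Arguments Etens {_ _ _ _} _ {_ _} _ _.
Arguments Eone {_ _ _ _} _.
Arguments EL {_ _ _ _} _ _.
Arguments Epitch {_ _ _ _} _ _ {_} _.
Arguments pair {_ _ _ _} _ {_ _ _} _ _ _ _.

(* (x)-strong monads on B, as Kleisli triples with strength             *)
Record StrongMonad (C : Cat) (M : Monoidal C) := {
  T : ob C -> ob C;
  ret : forall A, hom A (T A);
  bind : forall A B, hom A (T B) -> hom (T A) (T B);
  bind_ret : forall A, bind _ _ (ret A) = idm (T A);
  ret_bind : forall A B (f : hom A (T B)), bind _ _ f ∘ ret A = f;
  bind_bind : forall A B D (f : hom A (T B)) (g : hom B (T D)),
    bind _ _ g ∘ bind _ _ f = bind _ _ (bind _ _ g ∘ f);
  str : forall A X, hom (tens M A (T X)) (T (tens M A X));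
  str_nat_l : forall A A' X (h : hom A A'),
    str A' X ∘ tensm M h (idm (T X)) = bind _ _ (ret _ ∘ tensm M h (idm X)) ∘ str A X;
  str_nat_r : forall A X Y (h : hom X Y),
    str A Y ∘ tensm M (idm A) (bind _ _ (ret Y ∘ h))
    = bind _ _ (ret _ ∘ tensm M (idm A) h) ∘ str A X;
  str_lunit : forall X,
    bind _ _ (ret X ∘ lunit M X) ∘ str (munit M) X = lunit M (T X);
  str_assoc : forall A B X,
    bind _ _ (ret _ ∘ assoc M A B X) ∘ str (tens M A B) X
    = str A (tens M B X) ∘ tensm M (idm A) (str B X) ∘ assoc M A B (T X);
  str_ret : forall A X, str A X ∘ tensm M (idm A) (ret X) = ret (tens M A X);
  str_bind : forall A X Y (f : hom X (T Y)),
    str A Y ∘ tensm M (idm A) (bind _ _ f) = bind _ _ (str A Y ∘ tensm M (idm A) f) ∘ str A X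
}.
Arguments StrongMonad {_} _.
Arguments T {_ _} _ _.
Arguments ret {_ _} _ _.
Arguments bind {_ _} _ {_ _} _.
Arguments str {_ _} _ _ _.

Record PoMonoid := {
  car : Type;
  le : car -> car -> Prop;
  one : car;
  mul : car -> car -> car;
  le_refl : forall a, le a a;
  le_trans : forall a b c, le a b -> le b c -> le a c;
  mul_assoc : forall a b c, mul a (mul b c) = mul (mul a b) c;
  mul_1l : forall a, mul one a = a;
  mul_1r : forall a, mul a one = a;
  mul_mono : forall a a' b b', le a a' -> le b b' -> le (mul a b) (mul a' b')
}.
Arguments le {_} _ _.
Arguments mul {_} _ _.

Definition OrdT {C M S K} (R : @WCMR C M S K) (Tm : StrongMonad M) :=
  forall X : ob C, Eob R (T Tm X).

Definition ord_le {C M S K} (R : @WCMR C M S K) (Tm : StrongMonad M)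
  (G G' : OrdT R Tm) : Prop :=
  forall X : ob C, Ehom R (G X) (G' X) (idm (T Tm X)).

Definition monotoneD {C M S K} (R : @WCMR C M S K) (Tm : StrongMonad M)
  (PM : PoMonoid) (D : car PM -> OrdT R Tm) : Prop :=
  forall a b, le a b -> ord_le R Tm (D a) (D b).

Definition ddag {C M} (Tm : StrongMonad M) {A X Z : ob C}
  (g : hom (tens M A X) (T Tm Z)) : hom (tens M A (T Tm X)) (T Tm Z) :=
  bind Tm g ∘ str Tm A X.

Definition kl {C M} (K : Closed M) (Tm : StrongMonad M) (X Y : ob C)
  : hom (tens M (ihom K X (T Tm Y)) (T Tm X)) (T Tm Y) :=
  ddag Tm (ev K X (T Tm Y)).

Definition Asign {C M S K} (R : @WCMR C M S K) (Tm : StrongMonad M)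
  (PM : PoMonoid) (D : car PM -> OrdT R Tm) : Prop :=
  monotoneD R Tm PM D /\
  forall (a b : car PM) (X Y : ob C),
    Ehom R (Etens R (Epitch R X (D a Y)) (D b X)) (D (mul b a) Y) (kl K Tm X Y).

Definition Comp {C M S K} (R : @WCMR C M S K) (Tm : StrongMonad M)
  (PM : PoMonoid) (D : car PM -> OrdT R Tm) : Prop :=
  monotoneD R Tm PM D /\
  forall (a b : car PM) (A : ob C) (Z : Eob R A) (X Y : ob C)
    (f : hom A (T Tm X)) (g : hom (tens M A X) (T Tm Y)),
    Ehom R Z (D a X) f ->
    Ehom R (Etens R Z (EL R X)) (D b Y) g ->
    Ehom R Z (D (mul a b) Y) (ddag Tm g ∘ pair R Z (D a X) (idm A) f).


(* Every sequential composite factors through [kl]: by the universal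
   property of [ev], [g^‡ ∘ ⟨id, f⟩ = kl ∘ ⟨curry g, f⟩], and [curry g] and
   [⟨curry g, f⟩] lift to E whenever [g] and [f] do; so Asign implies Comp.
   Conversely [kl] is itself such a composite, namely [g^‡ ∘ ⟨id, π₂⟩] for
   [g = ev ∘ (π₁ × id)] on [Z = (X ⋔ Δα Y) × Δβ X], so Comp implies Asign. *)

Section CartesianRefinement.

Variables (C : Cat) (M : Monoidal C) (S : Sym M) (K : Closed M) (R : WCMR S K).

Definition pi1 (A B : ob C) : hom (tens M A B) A :=
  runit M A ∘ tensm M (idm A) (bang C M S K R B).

Definition pi2 (A B : ob C) : hom (tens M A B) B :=
  lunit M B ∘ tensm M (bang C M S K R A) (idm B).

Lemma Ehom_pi1 A B (Z : Eob R A) (W : Eob R B) :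
  Ehom R (Etens R Z W) Z (pi1 A B).
Proof.
  eapply Ehom_comp.
  - apply Etensm; [apply Ehom_id | apply Ebang].
  - apply Erunit.
Qed.

Lemma Ehom_pi2 A B (Z : Eob R A) (W : Eob R B) :
  Ehom R (Etens R Z W) W (pi2 A B).
Proof.
  eapply Ehom_comp.
  - apply Etensm; [apply Ebang | apply Ehom_id].
  - apply Elunit.
Qed.

Lemma pi1_tensm A A' B B' (u : hom A A') (v : hom B B') :
  pi1 A' B' ∘ tensm M u v = u ∘ pi1 A B.
Proof.
  unfold pi1.
  rewrite <- comp_assoc, <- tensm_comp, comp_idl.
  rewrite (bang_uniq _ _ _ _ R _ (bang C M S K R B' ∘ v)).
  rewrite comp_assoc, runit_nat, <- comp_assoc, <- tensm_comp, comp_idl, comp_idr.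
  reflexivity.
Qed.

Lemma pi2_tensm A A' B B' (u : hom A A') (v : hom B B') :
  pi2 A' B' ∘ tensm M u v = v ∘ pi2 A B.
Proof.
  unfold pi2.
  rewrite <- comp_assoc, <- tensm_comp, comp_idl.
  rewrite (bang_uniq _ _ _ _ R _ (bang C M S K R A' ∘ u)).
  rewrite comp_assoc, lunit_nat, <- comp_assoc, <- tensm_comp, comp_idl, comp_idr.
  reflexivity.
Qed.

(* The value of [pair] does not depend on its [Eob] arguments, by [pair_uniq]. *)
Lemma tensm_pair D A A' B B' (Z : Eob R A) (W : Eob R B) (Z' : Eob R A') (W' : Eob R B')
    (a : hom D A) (b : hom D B) (u : hom A A') (v : hom B B') :
  tensm M u v ∘ pair R Z W a b = pair R Z' W' (u ∘ a) (v ∘ b).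
Proof.
  apply pair_uniq.
  - change (pi1 A' B' ∘ (tensm M u v ∘ pair R Z W a b) = u ∘ a).
    rewrite comp_assoc, pi1_tensm, <- comp_assoc.
    unfold pi1; rewrite pair_proj1; reflexivity.
  - change (pi2 A' B' ∘ (tensm M u v ∘ pair R Z W a b) = v ∘ b).
    rewrite comp_assoc, pi2_tensm, <- comp_assoc.
    unfold pi2; rewrite pair_proj2; reflexivity.
Qed.

Lemma pair_pi A B (Z : Eob R A) (W : Eob R B) :
  pair R Z W (pi1 A B) (pi2 A B) = idm (tens M A B).
Proof.
  symmetry; apply pair_uniq; apply comp_idr.
Qed.

Variable Tm : StrongMonad M.

Lemma ddag_tensm_l A A' X Y (h : hom A A') (e : hom (tens M A' X) (T Tm Y)) :
  ddag Tm (e ∘ tensm M h (idm X)) = ddag Tm e ∘ tensm M h (idm (T Tm X)).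
Proof.
  unfold ddag.
  rewrite <- comp_assoc, str_nat_l, comp_assoc, bind_bind, comp_assoc, ret_bind.
  reflexivity.
Qed.

Lemma ddag_pair_kl A X Y (Z : Eob R A) (Z' : Eob R (ihom K X (T Tm Y)))
    (W W' : Eob R (T Tm X)) (f : hom A (T Tm X)) (g : hom (tens M A X) (T Tm Y)) :
  ddag Tm g ∘ pair R Z W (idm A) f = kl K Tm X Y ∘ pair R Z' W' (curry K g) f.
Proof.
  unfold kl.
  replace (ddag Tm g) with (ddag Tm (ev K X (T Tm Y) ∘ tensm M (curry K g) (idm X)))
    by (rewrite ev_curry; reflexivity).
  rewrite ddag_tensm_l, <- comp_assoc, tensm_pair with (Z' := Z') (W' := W').
  rewrite comp_idr, comp_idl; reflexivity.
Qed.

Lemma curry_ev_pi1 A X Y :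
  curry K (ev K X Y ∘ tensm M (pi1 (ihom K X Y) A) (idm X)) = pi1 (ihom K X Y) A.
Proof.
  symmetry; apply curry_uniq; reflexivity.
Qed.

Lemma kl_ddag_pi X Y (Z : Eob R (tens M (ihom K X (T Tm Y)) (T Tm X)))
    (W : Eob R (T Tm X)) :
  kl K Tm X Y
  = ddag Tm (ev K X (T Tm Y) ∘ tensm M (pi1 (ihom K X (T Tm Y)) (T Tm X)) (idm X))
      ∘ pair R Z W (idm _) (pi2 _ _).
Proof.
  rewrite ddag_pair_kl with (Z' := EL R _) (W' := EL R _).
  rewrite curry_ev_pi1, pair_pi.
  symmetry; apply comp_idr.
Qed.

End CartesianRefinement.

Theorem theorem8 :
  forall (C : Cat) (M : Monoidal C) (S : Sym M) (K : Closed M)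
    (R : WCMR S K) (Tm : StrongMonad M) (PM : PoMonoid)
    (D : car PM -> OrdT R Tm),
    Asign R Tm PM D <-> Comp R Tm PM D.
Proof.
  intros C M S K R Tm PM D. split.
  - intros [Hmono Hkl]. split; [exact Hmono |].
    intros a b A Z X Y f g Hf Hg.
    rewrite ddag_pair_kl with (Z' := Epitch R X (D b Y)) (W' := D a X).
    eapply Ehom_comp; [| apply Hkl].
    apply Epair; [apply Ecurry, Hg | exact Hf].
  - intros [Hmono Hcomp]. split; [exact Hmono |].
    intros a b X Y.
    rewrite kl_ddag_pi
      with (Z := Etens R (Epitch R X (D a Y)) (D b X)) (W := D b X).
    apply Hcomp; [apply Ehom_pi2 |].
    eapply Ehom_comp; [| apply Eev].
    apply Etensm; [apply Ehom_pi1 | apply Ehom_id].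
Qed.
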